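(* Let $M:\mathbb M\to\mathbb{P}\mathrm{b}$ be a cartesian multicategory. Let $\alpha:X\to Z$ be a loose arrow and $f:X\to Y$ a tight arrow of $\mathbb M$ such that $M_0f$ is a bijection, let $g=f^{-1}$ (the inverse tight arrow, lying over $(M_0f)^{-1}$), and let $h=M_l\alpha\circ(M_0f)^{-1}:M_0Y\to M_0Z$. Then the covariant reindexing $f^h_!\alpha$ coincides with the contravariant reindexing $g^*\alpha$, i.e. with the left loose side of the unique cell of $\mathbb M$ having right side $\alpha$, top $g$ and bottom $\mathrm{id}_Z$.
   Context: All double categories are strict; a double category $\mathbb A$ has tight category $\mathbb A_0$, a category $\mathbb A_1$ of loose arrows and cells, $s,t:\mathbb A_1\to\mathbb A_0$, and associative unital loose composition; a cell has left/right loose sides (domain/codomain in $\mathbb A_1$) and top/bottom tight sides. $\mathbb{P}\mathrm{b}$ is the double category of finite sets with maps as tight and loose arrows and pullback squares as cells (left side $f:I\to J$, right side $g:L\to K$, top $k:I\to L$, bottom $l:J\to K$, with $gk=lf$ a pullback). A symmetric multicategory is a double category $\mathbb M$ whose $\mathbb M_0,\mathbb M_1$ have finite sums preserved by $s,t$, with a double functor $M:\mathbb M\to\mathbb{P}\mathrm{b}$ whose components $M_0:\mathbb M_0\to\mathrm{Set}_f$, $M_1:\mathbb M_1\to\mathbb{P}\mathrm{b}_1$ preserve finite sums and are discrete fibrations ($M_l$ = action on loose arrows). Thus each pullback square in $\mathrm{Set}_f$ with right side $M_l\beta$ lifts uniquely to a cell with right side $\beta$. Cartesian multicategory (covariant reindexing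 form, given in the paper as equivalent to being an algebra for its monad $(-)^{\mathrm{cart}}$): a symmetric multicategory with an assignment, to each loose $\alpha:X\to Z$, tight $f:X\to Y$ and map $h:M_0Y\to M_0Z$ with $h\circ M_0f=M_l\alpha$, of a loose $f^h_!\alpha:Y\to Z$ with $M_l(f^h_!\alpha)=h$, satisfying: (U) $(\mathrm{id}_X)^{M_l\alpha}_!\alpha=\alpha$; (Functoriality) $f^h_!(g^{h'}_!\alpha)=(fg)^h_!\alpha$ for tight $g:X\to Y$, $f:Y\to W$, maps $h'\circ M_0g=M_l\alpha$, $h\circ M_0f=h'$; (Frobenius) for a cell with left side $\gamma:W\to V$, right side $\alpha:X\to Y$, top $k$, bottom $g:V\to Y$, loose $\beta:V\to Z$ and map $m$ with $m\circ M_0g=M_l\beta$: $k^{m\circ M_l\alpha}_!(\beta\gamma)=(g^m_!\beta)\alpha$; (Tailing) for loose $\alpha:U\to Y$, tight $f:U\to X$, $m\circ M_0f=M_l\alpha$, loose $\beta:Y\to Z$: $f^{M_l\beta\circ m}_!(\beta\alpha)=\beta\circ f^m_!\alpha$; (Beck–Chevalley) if $\delta=f^h_!\alpha$ ($\alpha:X\to Z$, $f:X\to Y$), $c_1$ is a cell with right side $\alpha$, bottom tight $g:Z'\to Z$, left side $\alpha':X'\to Z'$, top $x$, and $c_2$ is a cell with right side $\delta$, bottom $g$, left side $\delta':Y'\to Z'$, top $y$, and $f':X'\to Y'$ is tight with $yf'=fx$ and $M_l\delta'\circ M_0f'=M_l\alpha'$, then $\delta'=f'^{M_l\delta'}_!\alpha'$.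 *)

From HB Require Import structures.
From mathcomp Require Import all_boot.

Set Implicit Arguments.
Unset Strict Implicit.
Unset Printing Implicit Defensive.

(* Morphisms viewed as elements of the set of ALL morphisms of a      *)
(* category (single-sorted view): equality of "total" morphisms is    *)
(* equality of (domain, codomain, arrow).  Used to compare arrows     *)
(* whose (co)domains are only propositionally equal.                  *)
Definition tot {O : Type} (H : O -> O -> Type) {a b : O} (f : H a b)
  : {p : O * O & H p.1 p.2} :=
  existT (fun p : O * O => H p.1 p.2) (a, b) f.
Arguments tot {O} H {a b} f.

Definition fnH (A B : finType) : Type := A -> B.
Definition tf {A B : finType} (u : A -> B) := @tot finType fnH A B u.

Record Category := {
  ob : Type;
  hom : ob -> ob -> Type;
  idc : forall a, hom a a;
  cmp : forall a b c, hom b c -> hom a b -> hom a c;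
  cmp_id_l : forall a b (f : hom a b), cmp (idc b) f = f;
  cmp_id_r : forall a b (f : hom a b), cmp f (idc a) = f;
  cmp_assoc : forall a b c d (h : hom c d) (g : hom b c) (f : hom a b),
      cmp h (cmp g f) = cmp (cmp h g) f
}.
Arguments hom : clear implicits.
Arguments idc {_} _.
Arguments cmp {_ _ _ _} _ _.

Record Functor (C D : Category) := {
  fob : ob C -> ob D;
  fhom : forall a b, hom C a b -> hom D (fob a) (fob b);
  fhom_id : forall a, fhom (idc a) = idc (fob a);
  fhom_cmp : forall a b c (g : hom C b c) (f : hom C a b),
      fhom (cmp g f) = cmp (fhom g) (fhom f)
}.
Arguments fob {C D} _ _.
Arguments fhom {C D} _ {a b} _.

Definition is_initial {O : Type} (H : O -> O -> Type) (i : O) : Prop :=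
  forall x, exists f : H i x, forall g : H i x, g = f.

Definition is_coprod {O : Type} (H : O -> O -> Type)
    (cm : forall a b c, H b c -> H a b -> H a c)
    (a b c : O) (i1 : H a c) (i2 : H b c) : Prop :=
  forall x (f : H a x) (g : H b x), exists u : H c x,
    [/\ cm _ _ _ u i1 = f, cm _ _ _ u i2 = g &
        forall u' : H c x, cm _ _ _ u' i1 = f -> cm _ _ _ u' i2 = g -> u' = u].

Arguments is_coprod {O} H cm {a b c} i1 i2.

Definition has_finite_sums (C : Category) : Prop :=
  (exists i, is_initial (hom C) i) /\
  forall a b, exists c (i1 : hom C a c) (i2 : hom C b c),
    is_coprod (hom C) (@cmp C) i1 i2.

Definition preserves_finite_sums {O1 O2 : Type}
    (H1 : O1 -> O1 -> Type) (cm1 : forall a b c, H1 b c -> H1 a b -> H1 a c)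
    (H2 : O2 -> O2 -> Type) (cm2 : forall a b c, H2 b c -> H2 a b -> H2 a c)
    (Fo : O1 -> O2) (Fh : forall a b, H1 a b -> H2 (Fo a) (Fo b)) : Prop :=
  (forall i, is_initial H1 i -> is_initial H2 (Fo i)) /\
  (forall a b c (i1 : H1 a c) (i2 : H1 b c),
      is_coprod H1 cm1 i1 i2 -> is_coprod H2 cm2 (Fh _ _ i1) (Fh _ _ i2)).

Arguments preserves_finite_sums {O1 O2} H1 cm1 H2 cm2 Fo Fh.

Definition setf_cmp (A B C : finType) (g : fnH B C) (f : fnH A B) : fnH A C :=
  fun x => g (f x).

(* A square  gk = lf  (left f : I -> J, right g : L -> K, top k : I -> L,
   bottom l : J -> K) which is a pullback in Set_f (universal property). *)
Definition is_pullback {I J L K : finType}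
    (f : I -> J) (g : L -> K) (k : I -> L) (l : J -> K) : Prop :=
  g \o k = l \o f /\
  forall (W : finType) (a : W -> J) (b : W -> L), l \o a = g \o b ->
    exists u : W -> I, (f \o u = a /\ k \o u = b) /\
      forall u' : W -> I, f \o u' = a -> k \o u' = b -> u' = u.

(* objects of Pb_1: maps of finite sets *)
Definition PbOb := {p : finType * finType & fnH p.1 p.2}.
Definition pb_src (p : PbOb) : finType := (projT1 p).1.
Definition pb_tgt (p : PbOb) : finType := (projT1 p).2.
Definition pb_map (p : PbOb) : pb_src p -> pb_tgt p := projT2 p.

(* morphisms of Pb_1: pullback squares (top, bottom) *)
Definition PbHom (p q : PbOb) :=
  {kl : (pb_src p -> pb_src q) * (pb_tgt p -> pb_tgt q) |
     is_pullback (@pb_map p) (@pb_map q) kl.1 kl.2}.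

Lemma pb_paste (I J L K P Q : finType) (f : I -> J) (g : L -> K) (r : P -> Q)
    (k : I -> L) (l : J -> K) (k' : L -> P) (l' : K -> Q) :
  is_pullback f g k l -> is_pullback g r k' l' ->
  is_pullback f r (k' \o k) (l' \o l).
Proof.
move=> [c1 u1] [c2 u2]; split.
  by rewrite -[r \o (k' \o k)]/((r \o k') \o k) c2 -[(l' \o g) \o k]/(l' \o (g \o k)) c1.
move=> W a b E.
have [v [[v1 v2] vU]] := u2 W (l \o a) b E.
have [w [[w1 w2] wU]] := u1 W a v (esym v1).
exists w; split.
  by split=> //; rewrite -[(k' \o k) \o w]/(k' \o (k \o w)) w2.
move=> w' e1 e2.
apply: wU => //.
apply: vU; first by rewrite -[g \o (k \o w')]/((g \o k) \o w') c1 -e1.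
exact: e2.
Qed.

Definition pb_cmp (p q r : PbOb) (y : PbHom q r) (x : PbHom p q) : PbHom p r :=
  exist _ ((sval y).1 \o (sval x).1, (sval y).2 \o (sval x).2)
        (pb_paste (svalP x) (svalP y)).

(* Strict double categories, in the form: tight category A_0, category *)
(* A_1 of loose arrows (objects) and cells (morphisms; domain = left   *)
(* side, codomain = right side), functors s,t : A_1 -> A_0 (top and    *)
(* bottom sides), unit functor e, and loose composition, a functor on  *)
(* composable pairs, strictly associative and unital.                  *)
(*   lc b a  is the loose composite  b . a  (a first), defined/lawful   *)
(*   when t a = s b.                                                   *)
Record DblCat := {
  C0 : Category;
  C1 : Category;
  dsrc : Functor C1 C0;
  dtgt : Functor C1 C0;
  dunit : Functor C0 C1;
  src_unit : forall a, fob dsrc (fob dunit a) = a;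
  tgt_unit : forall a, fob dtgt (fob dunit a) = a;
  src_unit_h : forall a b (k : hom C0 a b),
      tot (hom C0) (fhom dsrc (fhom dunit k)) = tot (hom C0) k;
  tgt_unit_h : forall a b (k : hom C0 a b),
      tot (hom C0) (fhom dtgt (fhom dunit k)) = tot (hom C0) k;
  lc : ob C1 -> ob C1 -> ob C1;
  lch : forall a a' b b', hom C1 b b' -> hom C1 a a' -> hom C1 (lc b a) (lc b' a');
  lc_src : forall a b, fob dtgt a = fob dsrc b -> fob dsrc (lc b a) = fob dsrc a;
  lc_tgt : forall a b, fob dtgt a = fob dsrc b -> fob dtgt (lc b a) = fob dtgt b;
  lch_src : forall a a' b b' (y : hom C1 b b') (x : hom C1 a a'),
      tot (hom C0) (fhom dtgt x) = tot (hom C0) (fhom dsrc y) ->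
      tot (hom C0) (fhom dsrc (lch y x)) = tot (hom C0) (fhom dsrc x);
  lch_tgt : forall a a' b b' (y : hom C1 b b') (x : hom C1 a a'),
      tot (hom C0) (fhom dtgt x) = tot (hom C0) (fhom dsrc y) ->
      tot (hom C0) (fhom dtgt (lch y x)) = tot (hom C0) (fhom dtgt y);
  lch_id : forall a b, fob dtgt a = fob dsrc b -> lch (idc b) (idc a) = idc (lc b a);
  lch_cmp : forall a a' a'' b b' b'' (y : hom C1 b b') (y' : hom C1 b' b'')
      (x : hom C1 a a') (x' : hom C1 a' a''),
      tot (hom C0) (fhom dtgt x) = tot (hom C0) (fhom dsrc y) ->
      tot (hom C0) (fhom dtgt x') = tot (hom C0) (fhom dsrc y') ->
      lch (cmp y' y) (cmp x' x) = cmp (lch y' x') (lch y x);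
  lc_assoc : forall a b c, fob dtgt a = fob dsrc b -> fob dtgt b = fob dsrc c ->
      lc c (lc b a) = lc (lc c b) a;
  lch_assoc : forall a a' b b' c c' (x : hom C1 a a') (y : hom C1 b b') (z : hom C1 c c'),
      tot (hom C0) (fhom dtgt x) = tot (hom C0) (fhom dsrc y) ->
      tot (hom C0) (fhom dtgt y) = tot (hom C0) (fhom dsrc z) ->
      tot (hom C1) (lch z (lch y x)) = tot (hom C1) (lch (lch z y) x);
  lc_unit_l : forall a, lc (fob dunit (fob dtgt a)) a = a;
  lc_unit_r : forall a, lc a (fob dunit (fob dsrc a)) = a;
  lch_unit_l : forall a a' (x : hom C1 a a'),
      tot (hom C1) (lch (fhom dunit (fhom dtgt x)) x) = tot (hom C1) x;
  lch_unit_r : forall a a' (x : hom C1 a a'),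
      tot (hom C1) (lch x (fhom dunit (fhom dsrc x))) = tot (hom C1) x
}.

Definition tob (D : DblCat) := ob (C0 D).
Definition tight (D : DblCat) := hom (C0 D).
Definition loose (D : DblCat) := ob (C1 D).
Definition cell (D : DblCat) := hom (C1 D).           (* cells: left -> right *)
Arguments tight : clear implicits.
Arguments cell : clear implicits.
Definition lsrc (D : DblCat) (x : loose D) : tob D := fob (dsrc D) x.
Definition ltgt (D : DblCat) (x : loose D) : tob D := fob (dtgt D) x.
Definition ctop (D : DblCat) {x y : loose D} (c : cell D x y)
  : tight D (lsrc x) (lsrc y) := fhom (dsrc D) c.
Definition cbot (D : DblCat) {x y : loose D} (c : cell D x y)
  : tight D (ltgt x) (ltgt y) := fhom (dtgt D) c.

(* Symmetric multicategory: a double category M with finite sums in    *)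
(* M_0, M_1 preserved by s,t, and a double functor M : M -> Pb whose   *)
(* components preserve finite sums and are discrete fibrations.        *)
(* The double functor: M0o/M0h on A_0 (into Set_f); on loose arrows    *)
(* Ml x : M0o (s x) -> M0o (t x); on cells, the image of a cell c is   *)
(* the square (left Ml x, right Ml y, top M0 (s c), bottom M0 (t c)),  *)
(* which is required to be a pullback.                                 *)
Record SymMulticat := {
  MD :> DblCat;
  M0o : tob MD -> finType;
  M0h : forall a b, tight MD a b -> M0o a -> M0o b;
  M0h_id : forall a, M0h (idc a) = id;
  M0h_cmp : forall a b c (g : tight MD b c) (f : tight MD a b),
      M0h (cmp g f) = M0h g \o M0h f;
  Ml : forall x : loose MD, M0o (lsrc x) -> M0o (ltgt x);
  M1_pb : forall x y (c : cell MD x y),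
      is_pullback (@Ml x) (@Ml y) (M0h (ctop c)) (M0h (cbot c));
  Ml_unit : forall a : tob MD,
      tf (@Ml (fob (dunit MD) a)) = tf (@id (M0o a));
  Ml_cmp : forall (x y : loose MD) (E : ltgt x = lsrc y),
      tf (@Ml (lc y x)) =
      tf (@Ml y \o eq_rect _ (fun o => M0o (lsrc x) -> M0o o) (@Ml x) _ E);
  sums0 : has_finite_sums (C0 MD);
  sums1 : has_finite_sums (C1 MD);
  src_sums : preserves_finite_sums (hom (C1 MD)) (@cmp (C1 MD)) (hom (C0 MD)) (@cmp (C0 MD))
               (fob (dsrc MD)) (fun a b => @fhom _ _ (dsrc MD) a b);
  tgt_sums : preserves_finite_sums (hom (C1 MD)) (@cmp (C1 MD)) (hom (C0 MD)) (@cmp (C0 MD))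
               (fob (dtgt MD)) (fun a b => @fhom _ _ (dtgt MD) a b);
  M0_sums : preserves_finite_sums (hom (C0 MD)) (@cmp (C0 MD)) fnH setf_cmp M0o M0h;
  M1_sums : preserves_finite_sums (hom (C1 MD)) (@cmp (C1 MD)) PbHom pb_cmp
              (fun x => tf (@Ml x))
              (fun x y (c : cell MD x y) =>
                 exist (fun kl : (M0o (lsrc x) -> M0o (lsrc y)) *
                                 (M0o (ltgt x) -> M0o (ltgt y)) =>
                          is_pullback (@Ml x) (@Ml y) kl.1 kl.2)
                       (M0h (ctop c), M0h (cbot c)) (M1_pb c));
  M0_dfib : forall (Y : tob MD) (A : finType) (u : A -> M0o Y),
      exists (W : tob MD) (w : tight MD W Y),
        tf (M0h w) = tf u /\
        forall (W' : tob MD) (w' : tight MD W' Y), tf (M0h w') = tf u ->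
          existT (fun V => tight MD V Y) W' w' = existT _ W w;
  M1_dfib : forall (y : loose MD) (I J : finType) (p : I -> J)
      (k : I -> M0o (lsrc y)) (l : J -> M0o (ltgt y)),
      is_pullback p (@Ml y) k l ->
      exists (x : loose MD) (c : cell MD x y),
        [/\ tf (@Ml x) = tf p, tf (M0h (ctop c)) = tf k,
            tf (M0h (cbot c)) = tf l &
        forall (x' : loose MD) (c' : cell MD x' y),
          tf (@Ml x') = tf p -> tf (M0h (ctop c')) = tf k ->
          tf (M0h (cbot c')) = tf l ->
          existT (fun v => cell MD v y) x' c' = existT _ x c]
}.
Arguments M0h {s a b} _ _.
Arguments Ml {s} x _.
Arguments M0o {s} a.

(* Cartesian multicategory (covariant reindexing form).                *)
(* reidx x f h  is  f^h_! x ; it is specified on its domain of         *)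
(* definition: f : X -> Y tight with X = s x, h : M0 Y -> M0 Z with     *)
(* Z = t x and h o M0 f = Ml x.  (Values outside the domain are         *)
(* irrelevant.)                                                        *)
Definition reidx_dom (M : SymMulticat) (x : loose M) (X Y Z : tob M)
    (f : tight M X Y) (h : M0o Y -> M0o Z) : Prop :=
  [/\ X = lsrc x, Z = ltgt x & tf (h \o M0h f) = tf (Ml x)].

Record Cartesian (M : SymMulticat) := {
  reidx : forall (x : loose M) (X Y Z : tob M),
      tight M X Y -> (M0o Y -> M0o Z) -> loose M;
  reidx_spec : forall x X Y Z (f : tight M X Y) (h : M0o Y -> M0o Z),
      reidx_dom x f h ->
      [/\ lsrc (reidx x f h) = Y, ltgt (reidx x f h) = Z &
          tf (Ml (reidx x f h)) = tf h];
  reidx_U : forall x : loose M, reidx x (idc (lsrc x)) (Ml x) = x;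
  reidx_funct : forall (x : loose M) (X Y W Z : tob M)
      (g : tight M X Y) (f : tight M Y W)
      (h' : M0o Y -> M0o Z) (h : M0o W -> M0o Z),
      reidx_dom x g h' -> h \o M0h f = h' ->
      reidx (reidx x g h') f h = reidx x (cmp f g) h;
  (* (Frobenius): cell c with left side gm : W -> V, right side x : X -> Y,
     top k = ctop c, bottom g = cbot c; loose b : V -> Z; m o M0 g = Ml b *)
  reidx_frob : forall (gm x : loose M) (c : cell M gm x) (b : loose M)
      (Z : tob M) (m : M0o (ltgt x) -> M0o Z),
      reidx_dom b (cbot c) m ->
      reidx (lc b gm) (ctop c) (m \o Ml x) = lc (reidx b (cbot c) m) x;
  (* (Tailing): x : U -> Y, f : U -> X, m o M0 f = Ml x, b : Y -> Z *)
  reidx_tail : forall (x b : loose M) (X : tob M) (f : tight M (lsrc x) X)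
      (m : M0o X -> M0o (lsrc b)),
      ltgt x = lsrc b -> tf (m \o M0h f) = tf (Ml x) ->
      reidx (lc b x) f (Ml b \o m) = lc b (reidx x f m);
  reidx_bc : forall (x : loose M) (Y : tob M) (f : tight M (lsrc x) Y)
      (h : M0o Y -> M0o (ltgt x)),
      h \o M0h f = Ml x ->
      forall (x' d' : loose M)
        (c1 : cell M x' x) (c2 : cell M d' (reidx x f h))
        (f' : tight M (lsrc x') (lsrc d')),
      tot (tight M) (cbot c1) = tot (tight M) (cbot c2) ->
      tot (tight M) (cmp (ctop c2) f') = tot (tight M) (cmp f (ctop c1)) ->
      tf (Ml d' \o M0h f') = tf (Ml x') ->
      d' = reidx x' f' (Ml d')
}.
Arguments reidx {M} _ x {X Y Z} f h.

Definition is_contra_reindex (M : SymMulticat) (x : loose M) (Y : tob M)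
    (g : tight M Y (lsrc x)) (y : loose M) : Prop :=
  exists c : cell M y x,
    [/\ tot (tight M) (ctop c) = tot (tight M) g,
        tot (tight M) (cbot c) = tot (tight M) (idc (ltgt x)) &
        forall (y' : loose M) (c' : cell M y' x),
          tot (tight M) (ctop c') = tot (tight M) g ->
          tot (tight M) (cbot c') = tot (tight M) (idc (ltgt x)) ->
          existT (fun v => cell M v x) y' c' = existT _ y c].

(* Since [M_0 f] is invertible with inverse [M_0 g], the square with left side
   [M_l α ∘ M_0 g], right side [M_l α], top [M_0 g] and bottom [id] is a
   pullback; it lifts to a cell [c : y ⇒ α], whose top and bottom are [g] and
   [id] because [M_0] is a discrete fibration, so [y = g^* α].  Beck–Chevalley,
   applied to [c] and to the identity cell of [δ = f^h_! α] with [f' = f ∘ g],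
   gives [δ = (f g)^{M_l δ}_! y = id^{M_l y}_! y = y] by (U). *)
From HB Require Import structures.
From mathcomp Require Import all_boot.
From Stdlib Require Import Eqdep FunctionalExtensionality.

Set Implicit Arguments.
Unset Strict Implicit.
Unset Printing Implicit Defensive.

Lemma tot_endpoints {O : Type} (H : O -> O -> Type) a b a' b'
    (u : H a b) (v : H a' b') :
  tot H u = tot H v -> a = a' /\ b = b'.
Proof. by move/(f_equal (@projT1 _ _)) => [-> ->]. Qed.

Lemma tot_inj {O : Type} (H : O -> O -> Type) a b (u v : H a b) :
  tot H u = tot H v -> u = v.
Proof. exact: inj_pair2. Qed.

Lemma tot_eq_rect {O : Type} (H : O -> O -> Type) a b b' (e : b = b')
    (u : H a b) :
  tot H (eq_rect b (H a) u b' e) = tot H u.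
Proof. by case: b' / e. Qed.

Lemma tot_idc (C : Category) (a b : ob C) :
  a = b -> tot (hom C) (idc a) = tot (hom C) (idc b).
Proof. by move=> ->. Qed.

Lemma tot_cmp (C : Category) (a b c a' b' : ob C)
    (u : hom C a b) (u' : hom C a' b') (v : hom C b c) (v' : hom C b' c) :
  tot (hom C) u = tot (hom C) u' -> tot (hom C) v = tot (hom C) v' ->
  tot (hom C) (cmp v u) = tot (hom C) (cmp v' u').
Proof.
move=> Eu Ev; case: (tot_endpoints Eu) => ea eb; subst a' b'.
by rewrite (tot_inj Eu) (tot_inj Ev).
Qed.

Lemma tf_comp (A B C A' B' C' : finType) (u : A -> B) (u' : A' -> B')
    (v : B -> C) (v' : B' -> C') :
  tf u = tf u' -> tf v = tf v' -> tf (v \o u) = tf (v' \o u').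
Proof.
move=> Eu Ev; case: (tot_endpoints Eu) => ea eb; case: (tot_endpoints Ev) => _ ec.
subst A' B' C'.
by rewrite (tot_inj Eu) (tot_inj Ev).
Qed.

Lemma tf_id_comp (A B C : finType) (u : A -> B) (v : B -> C) :
  tf v = tf (@id C) -> tf (v \o u) = tf u.
Proof.
move=> Ev; case: (tot_endpoints Ev) => eb _; subst C.
by rewrite (tot_inj Ev).
Qed.

Lemma tf_comp_id (A B C : finType) (u : A -> B) (v : B -> C) :
  tf u = tf (@id A) -> tf (v \o u) = tf v.
Proof.
move=> Eu; case: (tot_endpoints Eu) => _ eb; subst B.
by rewrite (tot_inj Eu).
Qed.

Lemma is_pullback_bijective_top (I L K : finType) (q : L -> K) (k : I -> L) :
  bijective k -> is_pullback (q \o k) q k id.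
Proof.
case=> k' kK k'K; split=> // W a b /= Eab.
exists (k' \o b); split.
  split; apply: functional_extensionality => w /=; last exact: k'K.
  by rewrite k'K; have := f_equal (fun F => F w) Eab.
move=> u' _ Eb; apply: functional_extensionality => w /=.
by rewrite -Eb /= kK.
Qed.

Section SymMulticat.

Variable M : SymMulticat.

Lemma tot_M0h (a b a' b' : tob M) (u : tight M a b) (v : tight M a' b') :
  tot (tight M) u = tot (tight M) v -> tf (M0h u) = tf (M0h v).
Proof.
move=> E; case: (tot_endpoints E) => ea eb; subst a' b'.
by rewrite (tot_inj E).
Qed.

Lemma tot_M0h_idc (a b : tob M) (u : tight M a b) :
  tot (tight M) u = tot (tight M) (idc b) -> tf (M0h u) = tf (@id (M0o b)).
Proof. by move/tot_M0h; rewrite M0h_id. Qed.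

Lemma M0h_tot_inj (T V V' : tob M) (u : tight M V T) (v : tight M V' T) :
  tf (M0h u) = tf (M0h v) -> tot (tight M) u = tot (tight M) v.
Proof.
move=> E; have [W [w [_ Hw]]] := M0_dfib (M0h v).
have Euv := etrans (Hw _ u E) (esym (Hw _ v erefl)).
exact: (f_equal (fun s : {V : tob M & tight M V T} => tot (tight M) (projT2 s)) Euv).
Qed.

Lemma Ml_cell_over_idc (y x : loose M) (c : cell M y x) :
  tot (tight M) (cbot c) = tot (tight M) (idc (ltgt x)) ->
  tf (Ml y) = tf (Ml x \o M0h (ctop c)).
Proof.
move=> /tot_M0h_idc Ebot; have [-> _] := M1_pb c.
by rewrite tf_id_comp.
Qed.

Lemma contra_reindex_of_bijective (x : loose M) (Y : tob M)
    (g : tight M Y (lsrc x)) :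
  bijective (M0h g) -> exists y, is_contra_reindex g y.
Proof.
move=> /(is_pullback_bijective_top (Ml x)) Hpb.
have [y [c [_ Htop Hbot Huniq]]] := M1_dfib Hpb.
exists y, c; split.
- by apply: M0h_tot_inj; rewrite Htop.
- by apply: M0h_tot_inj; rewrite Hbot M0h_id.
move=> y' c' /tot_M0h Etop Ebot; apply: Huniq => //.
- by rewrite (Ml_cell_over_idc Ebot) (tf_comp Etop erefl).
- by rewrite (tot_M0h_idc Ebot).
Qed.

End SymMulticat.

Section Cartesian.

Variables (M : SymMulticat) (C : Cartesian M).

Lemma reidx_congr (x : loose M) (X Y Z Y' Z' : tob M)
    (f : tight M X Y) (f' : tight M X Y')
    (h : M0o Y -> M0o Z) (h' : M0o Y' -> M0o Z') :
  Z = Z' -> tot (tight M) f = tot (tight M) f' -> tf h = tf h' ->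
  reidx C x f h = reidx C x f' h'.
Proof.
move=> ez Ef Eh; case: (tot_endpoints Ef) => _ ey; subst Y' Z'.
by rewrite (tot_inj Ef) (tot_inj Eh).
Qed.

Lemma reidx_tot_idc (y : loose M) (Y Z : tob M) (f : tight M (lsrc y) Y)
    (h : M0o Y -> M0o Z) :
  Z = ltgt y -> tot (tight M) f = tot (tight M) (idc (lsrc y)) ->
  tf h = tf (Ml y) -> reidx C y f h = y.
Proof. by move=> ez Ef Eh; rewrite (reidx_congr _ ez Ef Eh) reidx_U. Qed.

Lemma reidx_eq_of_cell_section (x : loose M) (Y : tob M)
    (f : tight M (lsrc x) Y) (h : M0o Y -> M0o (ltgt x))
    (y : loose M) (c : cell M y x) :
  h \o M0h f = Ml x ->
  tot (tight M) (cbot c) = tot (tight M) (idc (ltgt x)) ->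
  tot (tight M) (cmp f (ctop c)) = tot (tight M) (idc Y) ->
  reidx C x f h = y.
Proof.
move=> Hh Ebot Esec.
have [Ed Edt Edh] := reidx_spec C (And3 erefl erefl (f_equal tf Hh)).
set d := reidx C x f h in Ed Edt Edh *.
pose f' := eq_rect Y (tight M (lsrc y)) (cmp f (ctop c)) (lsrc d) (esym Ed).
have Ef' : tot (tight M) f' = tot (tight M) (cmp f (ctop c)) by apply: tot_eq_rect.
have Ebot' : tot (tight M) (cbot c) = tot (tight M) (cbot (idc d)).
  by rewrite /cbot fhom_id Ebot; apply: tot_idc.
have Ef'c : tot (tight M) (cmp (ctop (idc d)) f') = tot (tight M) (cmp f (ctop c)).
  by rewrite /ctop fhom_id cmp_id_l.
have EMl : tf (Ml d \o M0h f') = tf (Ml y).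
  rewrite (Ml_cell_over_idc Ebot) -Hh.
  rewrite -[(h \o M0h f) \o _]/(h \o (M0h f \o M0h (ctop c))) -M0h_cmp.
  exact: tf_comp (tot_M0h Ef') Edh.
have Eid : tot (tight M) f' = tot (tight M) (idc (lsrc y)).
  by rewrite Ef' Esec; apply: tot_idc; case: (tot_endpoints Esec) => ->.
rewrite (reidx_bc Hh Ebot' Ef'c EMl); apply: (reidx_tot_idc _ Eid).
- by rewrite Edt; case: (tot_endpoints Ebot) => ->.
- by rewrite -EMl tf_comp_id // (tot_M0h Eid) M0h_id.
Qed.

End Cartesian.

Theorem proposition4p20 (M : SymMulticat) (C : Cartesian M)
    (x : loose M) (Y : tob M)
    (f : tight M (lsrc x) Y) (g : tight M Y (lsrc x))
    (finv : M0o Y -> M0o (lsrc x)) :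
  bijective (M0h f) ->
  cancel (M0h f) finv -> cancel finv (M0h f) ->
  cmp g f = idc (lsrc x) -> cmp f g = idc Y ->
  is_contra_reindex g (reidx C x f (Ml x \o finv)).
Proof.
move=> _ fK _ Egf Efg.
have Mg_bij : bijective (M0h g).
  exists (M0h f) => z.
  - by rewrite -[M0h f _]/((M0h f \o M0h g) z) -M0h_cmp Efg M0h_id.
  - by rewrite -[M0h g _]/((M0h g \o M0h f) z) -M0h_cmp Egf M0h_id.
have [y Hy] := contra_reindex_of_bijective Mg_bij.
suff -> : reidx C x f (Ml x \o finv) = y by [].
have [c [Etop Ebot _]] := Hy.
apply: (reidx_eq_of_cell_section _ _ Ebot).
- by apply: functional_extensionality => z /=; rewrite fK.
- by rewrite (tot_cmp Etop (erefl (tot _ f))) Efg.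
Qed.
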